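(* Let $p$ be an odd prime and let $m,r$ be positive integers with $p\nmid m$ and $r<m$. Then for every integer $s$ with $0\le s\le\langle -\frac{m-r}{m}\rangle_p$, $$\sum_{k=0}^{p-s-1}\frac{(q^r;q^m)_k\,(q^{m-r};q^m)_{k+s}}{(q^m;q^m)_k\,(q^m;q^m)_{k+s}}\equiv(-1)^{\langle -\frac{r}{m}\rangle_p}\,q^{-\frac{m\langle -\frac{r}{m}\rangle_p(\langle -\frac{r}{m}\rangle_p+1)}{2}}\pmod{[p]}.$$ In particular, if moreover $p\equiv\pm1\pmod m$, then $$\sum_{k=0}^{p-s-1}\frac{(q^r;q^m)_k\,(q^{m-r};q^m)_{k+s}}{(q^m;q^m)_k\,(q^m;q^m)_{k+s}}\equiv(-1)^{\langle -\frac{r}{m}\rangle_p}\,q^{\frac{r(m-r)(1-p^2)}{2m}}\pmod{[p]}.$$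
   Context: For an indeterminate $q$ and an integer $n\ge 0$: $(a;q)_0=1$ and $(a;q)_n=(1-a)(1-aq)\cdots(1-aq^{n-1})$. For a positive integer $p$, $[p]=\frac{1-q^p}{1-q}=1+q+\cdots+q^{p-1}$. For a prime $p$, $[p]$ is irreducible in $\mathbb{Q}[q]$; for rational functions $A,B$ of $q$ whose denominators are coprime to $[p]$, $A\equiv B\pmod{[p]^r}$ means that $A-B$, written in lowest terms, has numerator divisible by $[p]^r$ in $\mathbb{Q}[q]$. For a prime $p$ and a $p$-adic integer $x$ (e.g. a rational number whose denominator is not divisible by $p$), $\langle x\rangle_p$ denotes the least nonnegative residue of $x$ modulo $p$, i.e. the unique integer in $\{0,1,\dots,p-1\}$ congruent to $x$ modulo $p$. *)

From HB Require Import structures.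
From mathcomp Require Import all_boot all_order all_algebra.
Set Implicit Arguments. Unset Strict Implicit. Unset Printing Implicit Defensive.
Import Order.TTheory GRing.Theory Num.Theory.
Local Open Scope ring_scope.

(* Polynomials in the indeterminate q over Q, and rational functions of q. *)
Notation qpoly := {poly rat}.
Notation qfrac := {fraction {poly rat}}.
Definition pfrac (P : qpoly) : qfrac := FracField.tofrac P.

Definition qpoch (a b : qpoly) (n : nat) : qpoly :=
  \prod_(i < n) (1 - a * b ^+ i).

Definition qint (p : nat) : qpoly := \sum_(i < p) 'X^i.

Definition qpow (e : int) : qfrac :=
  match e with
  | Posz n => pfrac 'X^n
  | Negz n => (pfrac 'X^(n.+1))^-1
  end.

(* A = B (mod [p]^r) for rational functions whose denominators are coprime
   to [p]: A - B = [p]^r * N / D with D a (nonzero) polynomial coprime to [p]. *)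
Definition qcong (p r : nat) (A B : qfrac) : Prop :=
  exists N D : qpoly, D != 0 /\ coprimep D (qint p) /\
    A - B = pfrac (qint p ^+ r * N) / pfrac D.

(* <x>_p : least nonnegative residue of the rational x modulo p, i.e. the
   least t in {0,...,p-1} with p | numq x - t * denq x  (returns p if none). *)
Definition lnr (p : nat) (x : rat) : nat :=
  find (fun t : nat => ((p%:Z) %| (numq x - t%:Z * denq x))%Z) (iota 0 p).

Definition summand (m r s k : nat) : qfrac :=
  pfrac (qpoch 'X^r 'X^m k * qpoch 'X^(m - r) 'X^m (k + s))
  / pfrac (qpoch 'X^m 'X^m k * qpoch 'X^m 'X^m (k + s)).

From HB Require Import structures.
From mathcomp Require Import all_boot all_order all_algebra all_field.
From mathcomp Require Import ring zify.
Set Implicit Arguments. Unset Strict Implicit. Unset Printing Implicit Defensive.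
Import Order.TTheory GRing.Theory Num.Theory.
Local Open Scope ring_scope.

(* Evaluation at a primitive p-th root of unity z: since [p] is the minimal
   polynomial of z over Q, two rational functions regular at z are congruent
   modulo [p] as soon as they take the same value at z.  Write a := <-r/m>_p,
   c = z^r, d = z^(m-r), x = z^m; then c x^a = 1 and d = x^(a+1).  At z the sum
   becomes a terminating sum of x-Pochhammer quotients which, by a telescoping
   (WZ-type) certificate, does not depend on s for s <= p-1-a; at s = p-1-a only
   the term k = 0 survives, and the reflection 1 - x^(p-j) = -x^(p-j)(1 - x^j)
   evaluates it to (-1)^a x^(-a(a+1)/2).  When p = +-1 mod m the second exponent
   agrees with m a(a+1)/2 modulo p. *)

Definition poch (K : pzRingType) (c x : K) (n : nat) : K := \prod_(i < n) (1 - c * x ^+ i).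

Lemma pochS (K : pzRingType) (c x : K) n : poch c x n.+1 = poch c x n * (1 - c * x ^+ n).
Proof. by rewrite /poch big_ord_recr. Qed.

Lemma poch0 (K : pzRingType) (c x : K) : poch c x 0 = 1.
Proof. by rewrite /poch big_ord0. Qed.

Lemma poch_eq0 (K : idomainType) (c x : K) n j :
  (j < n)%N -> c * x ^+ j = 1 -> poch c x n = 0.
Proof. by move=> ltjn cxj; apply/eqP/prodf_eq0; exists (Ordinal ltjn); rewrite //= cxj subrr. Qed.

Lemma prim_expr_neq1 (K : nzRingType) p (x : K) i :
  p.-primitive_root x -> (0 < i < p)%N -> x ^+ i != 1.
Proof.
move=> x_prim /andP[i_gt0 ltip]; rewrite -(prim_order_dvd x_prim).
by apply: contraTN ltip => /(dvdn_leq i_gt0); rewrite leqNgt.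
Qed.

Lemma poch_prim_neq0 (K : idomainType) p (x : K) n :
  p.-primitive_root x -> (n < p)%N -> poch x x n != 0.
Proof.
move=> x_prim ltnp; apply/prodf_neq0 => i _.
rewrite -exprS subr_eq0 eq_sym (prim_expr_neq1 x_prim) //=.
exact: leq_ltn_trans (ltn_ord i) ltnp.
Qed.

Lemma sum_bin2 a b : (\sum_(i < b) (a + b - i) + 'C(a.+1, 2) = 'C((a + b).+1, 2))%N.
Proof.
elim: b => [|b IHb]; first by rewrite big_ord0 addn0.
rewrite big_ord_recl /= -addnA.
have -> : (\sum_(i < b) (a + b.+1 - bump 0 i) = \sum_(i < b) (a + b - i))%N.
  by apply: eq_bigr => i _; rewrite /bump /=; lia.
by rewrite IHb -addnS binS bin1; lia.
Qed.

Section Telescoping.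

Variables (K : fieldType) (p a : nat) (x c d : K).
Hypotheses (x_prim : p.-primitive_root x) (cxa : c * x ^+ a = 1) (dE : d = x ^+ a.+1).

Definition qterm s k := poch c x k * poch d x (k + s) / (poch x x k * poch x x (k + s)).

Definition qsum s := \sum_(k < p - s) qterm s k.

Let x_neq0 : x != 0.
Proof. by rewrite (prim_root_eq0 x_prim) -lt0n (prim_order_gt0 x_prim). Qed.

Let cE : c = (x ^+ a)^-1.
Proof. by rewrite -[c]mulr1 -(divff (expf_neq0 a x_neq0)) mulrA cxa mul1r. Qed.

(* [cert s 0 = 0] and [cert s (p - s.+1) = 0] (there [qterm s] vanishes), so
   [qsum s.+1 = qsum s] by telescoping. *)
Let cert s k := x ^+ (s + a).+1 / (x ^+ (s + a).+1 - 1) * (1 - x ^+ k) * qterm s k.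

Lemma qterm_succ_telescope s k : (s + a < p.-1)%N -> (k + s < p.-1)%N ->
  qterm s.+1 k - qterm s k = cert s k.+1 - cert s k.
Proof.
move=> ltsa ltks.
have p_gt0 := prim_order_gt0 x_prim.
have nzA : poch x x k != 0 by apply: (poch_prim_neq0 x_prim); lia.
have nzB : poch x x (k + s) != 0 by apply: (poch_prim_neq0 x_prim); lia.
have nz1 : 1 - x * x ^+ k != 0.
  by rewrite -exprS subr_eq0 eq_sym (prim_expr_neq1 x_prim) //; lia.
have nz2 : 1 - x * x ^+ (k + s) != 0.
  by rewrite -exprS subr_eq0 eq_sym (prim_expr_neq1 x_prim) //; lia.
have nz3 : x ^+ (s + a).+1 - 1 != 0.
  by rewrite subr_eq0 (prim_expr_neq1 x_prim) //; lia.
have nzw : x ^+ a != 0 by rewrite expf_neq0.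
rewrite /cert /qterm addnS !pochS cE dE.
rewrite !exprS !exprD in nz1 nz2 nz3 *.
move: nzA nzB; set A := poch x x k; set B := poch x x (k + s).
set A' := poch _ x k; set B' := poch _ x (k + s) => nzA nzB.
field.
by rewrite nzA nzB nz1 nz2 nz3 nzw.
Qed.

Lemma qsum_succ s : (s + a < p.-1)%N -> qsum s.+1 = qsum s.
Proof.
move=> ltsa; have p_gt0 := prim_order_gt0 x_prim.
have lastE : (p - s = (p - s.+1).+1)%N by lia.
have last0 : qterm s (p - s.+1) = 0.
  by rewrite /qterm (@poch_eq0 _ c x _ a) ?mul0r //; lia.
rewrite /qsum lastE big_ord_recr /= last0 addr0.
apply/eqP; rewrite -subr_eq0 -sumrB -(big_mkord xpredT (fun k => qterm s.+1 k - qterm s k)).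
rewrite (telescope_sumr_eq (cert s)) //; last first.
  by move=> k /andP[_ ltk]; apply: qterm_succ_telescope; lia.
by rewrite /cert last0 expr0 subrr !mulr0 mul0r subrr.
Qed.

Lemma poch_reflect b : (a + b).+1 = p ->
  poch d x b = \prod_(i < b) (- x ^+ (a + b - i)) * poch x x b.
Proof.
move=> abp; rewrite /poch -big_split /= (reindex_inj rev_ord_inj) /=.
apply: eq_bigr => i _; have ltib := ltn_ord i.
rewrite dE -exprD mulrBr mulr1 mulNr opprK -!exprS -exprD addrC.
have -> : (a.+1 + (b - i.+1) = a + b - i)%N by lia.
have -> : (a + b - i + i.+1 = p)%N by lia.
by rewrite (prim_expr_order x_prim).
Qed.

Lemma qsum_last : odd p -> (a < p)%N -> qsum (p - a.+1) = (-1) ^+ a / x ^+ 'C(a.+1, 2).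
Proof.
move=> p_odd ltap; set b := (p - a.+1)%N; have abp : (a + b).+1 = p by lia.
rewrite /qsum (_ : p - b = a.+1)%N; last by lia.
rewrite big_ord_recl big1 ?addr0 => [|k _]; last first.
  rewrite /qterm (@poch_eq0 _ d x _ b) ?mulr0 ?mul0r //; first by rewrite lift0; lia.
  by rewrite dE -exprD addSn abp prim_expr_order.
rewrite /qterm !poch0 !mul1r add0n poch_reflect // mulfK; last first.
  by apply: (poch_prim_neq0 x_prim); lia.
under eq_bigr do rewrite -mulN1r.
rewrite big_split prodr_const card_ord prodrXr /=.
have x_bin2 : x ^+ 'C(p, 2) = 1.
  by rewrite bin2odd // exprM (prim_expr_order x_prim) expr1n.
have -> : x ^+ (\sum_(i < b) (a + b - i)) = (x ^+ 'C(a.+1, 2))^-1.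
  apply: (mulIf (expf_neq0 'C(a.+1, 2) x_neq0)); rewrite mulVf ?expf_neq0 //.
  by rewrite -exprD sum_bin2 abp x_bin2.
congr (_ * _); rewrite -signr_odd -[in RHS]signr_odd; congr (_ ^+ _).
by move: (congr1 odd abp); rewrite /= p_odd oddD; case: (odd a); case: (odd b).
Qed.

Lemma qsum_const s : odd p -> (a < p)%N -> (s <= p - a.+1)%N ->
  qsum s = (-1) ^+ a / x ^+ 'C(a.+1, 2).
Proof.
move=> p_odd ltap lesb.
rewrite -qsum_last // -(subKn lesb).
elim: (p - a.+1 - s)%N (leq_subr s (p - a.+1)) => [|t IHt] ltb; first by rewrite subn0.
rewrite -IHt; last by lia.
by rewrite (_ : _ - t = (p - a.+1 - t.+1).+1)%N ?qsum_succ //; lia.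
Qed.

End Telescoping.

Lemma size_qint p : (0 < p)%N -> size (qint p) = p.
Proof.
move=> p_gt0; have -> : qint p = \poly_(i < p) 1.
  by rewrite poly_def; apply: eq_bigr => i _; rewrite scale1r.
by rewrite size_poly_eq ?oner_neq0.
Qed.

Definition ev (z : algC) : {rmorphism {poly rat} -> algC} := horner_eval z \o map_poly ratr.

Lemma evX z : ev z 'X = z.
Proof. by rewrite /ev /= horner_evalE map_polyX hornerX. Qed.

Lemma ev_qpoch z A B n : ev z (qpoch A B n) = poch (ev z A) (ev z B) n.
Proof.
rewrite /qpoch rmorph_prod; apply: eq_bigr => i _.
by rewrite rmorphB rmorph1 rmorphM rmorphXn.
Qed.

Definition value_at (z : algC) (f : qfrac) (v : algC) :=
  exists P Q : {poly rat}, [/\ ev z Q != 0, f = pfrac P / pfrac Q & v = ev z P / ev z Q].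

Section ValueAt.

Variable z : algC.

Lemma pfrac_neq0 Q : ev z Q != 0 -> pfrac Q != 0.
Proof. by move=> Qz; rewrite /pfrac tofrac_eq0; apply: contraNneq Qz => ->; rewrite rmorph0. Qed.

Lemma value_at_poly P : value_at z (pfrac P) (ev z P).
Proof. by exists P, 1; rewrite /pfrac !rmorph1 !divr1 oner_neq0. Qed.

Lemma value_atD f g u v : value_at z f u -> value_at z g v -> value_at z (f + g) (u + v).
Proof.
move=> [P1 [Q1 [Q1z -> ->]]] [P2 [Q2 [Q2z -> ->]]].
exists (P1 * Q2 + P2 * Q1), (Q1 * Q2).
by rewrite /pfrac !rmorphD !rmorphM /= !addf_div ?mulf_neq0 ?pfrac_neq0.
Qed.

Lemma value_atM f g u v : value_at z f u -> value_at z g v -> value_at z (f * g) (u * v).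
Proof.
move=> [P1 [Q1 [Q1z -> ->]]] [P2 [Q2 [Q2z -> ->]]].
by exists (P1 * P2), (Q1 * Q2); rewrite /pfrac !rmorphM /= !mulf_div mulf_neq0.
Qed.

Lemma value_at_sum n (F : nat -> qfrac) (V : nat -> algC) :
  (forall k, (k < n)%N -> value_at z (F k) (V k)) ->
  value_at z (\sum_(k < n) F k) (\sum_(k < n) V k).
Proof.
elim: n => [|n IHn] FV.
  by rewrite !big_ord0 -(rmorph0 (ev z)) -(rmorph0 pfrac); apply: value_at_poly.
rewrite !big_ord_recr; apply: value_atD; last exact: FV.
by apply: IHn => k ltkn; apply: FV; apply: ltnW.
Qed.

Lemma value_at_sign n : value_at z ((-1) ^+ n) ((-1) ^+ n).
Proof. by have := value_at_poly ((-1) ^+ n); rewrite /pfrac !rmorphXn !rmorphN1. Qed.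

Lemma value_at_qpowN N : z != 0 -> value_at z (qpow (- N%:Z)) (z ^+ N)^-1.
Proof.
move=> z_neq0; case: N => [|N].
  by rewrite expr0 invr1; have := value_at_poly 1; rewrite /pfrac !rmorph1.
by exists 1, 'X^(N.+1); rewrite /pfrac !rmorph1 rmorphXn evX !div1r expf_neq0.
Qed.

Lemma value_at_signed_qpowN n N : z != 0 ->
  value_at z ((-1) ^+ n * qpow (- N%:Z)) ((-1) ^+ n / z ^+ N).
Proof. by move=> z_neq0; apply: value_atM; [apply: value_at_sign | apply: value_at_qpowN]. Qed.

End ValueAt.

Section PrimitiveRoot.

Variables (p : nat) (z : algC).
Hypotheses (p_prime : prime p) (z_prim : p.-primitive_root z).

Lemma ev_qint : ev z (qint p) = 0.
Proof.
have z_neq1 : z != 1 by rewrite -[z]expr1 (prim_expr_neq1 z_prim) ?prime_gt1.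
have : (z - 1) * ev z (qint p) = 0.
  rewrite rmorph_sum; under eq_bigr do rewrite rmorphXn evX.
  by rewrite -subrX1 (prim_expr_order z_prim) subrr.
by move/eqP; rewrite mulf_eq0 subr_eq0 (negbTE z_neq1) => /eqP.
Qed.

Lemma qint_dvdp P : (qint p %| P) = (ev z P == 0).
Proof.
have [pf [Dpf _] pf_dvdp] := minCpolyP z.
have ev_root Q : (ev z Q == 0) = root (map_poly ratr Q) z by [].
have pf_qint : pf %| qint p by rewrite -pf_dvdp -ev_root ev_qint.
have size_pf : size pf = size (qint p).
  rewrite size_qint ?prime_gt0 // -(size_map_poly (ratr : {rmorphism rat -> algC})) -Dpf.
  by rewrite (minCpoly_cyclotomic z_prim) size_cyclotomic totient_prime // prednK ?prime_gt0.
have /eqp_dvdl <- : pf %= qint p by rewrite -dvdp_size_eqp // size_pf.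
by rewrite -pf_dvdp ev_root.
Qed.

Lemma coprimep_qint D : ev z D != 0 -> coprimep D (qint p).
Proof.
move=> Dz; have qint_neq0 : qint p != 0.
  by rewrite -size_poly_eq0 size_qint ?prime_gt0 // -lt0n prime_gt0.
have /dvdpP[h qintE] := dvdp_gcdr D (qint p).
have h_neq0 : h != 0 by apply: contraNneq qint_neq0 => h0; rewrite qintE h0 mul0r.
have gz : ev z (gcdp D (qint p)) != 0.
  by apply: contra Dz; rewrite -!qint_dvdp => /dvdp_trans; apply; apply: dvdp_gcdl.
have hz : ev z h == 0.
  by move/eqP: ev_qint; rewrite qintE rmorphM mulf_eq0 (negbTE gz) orbF.
have : h * gcdp D (qint p) %| h * 1 by rewrite -qintE mulr1 qint_dvdp.
by rewrite dvdp_mul2l // dvdp1.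
Qed.

Lemma qcong_value_at f g v : value_at z f v -> value_at z g v -> qcong p 1 f g.
Proof.
move=> [P1 [Q1 [Q1z -> ->]]] [P2 [Q2 [Q2z -> /eqP]]].
rewrite eqr_div // -subr_eq0 -!rmorphM -rmorphB -qint_dvdp.
move=> /dvdpP[N NE]; exists N, (Q1 * Q2).
have Q12z : ev z (Q1 * Q2) != 0 by rewrite rmorphM mulf_neq0.
split; last split.
- by apply: contraNneq Q12z => ->; rewrite rmorph0.
- exact: coprimep_qint.
- have [Q1f Q2f] := (pfrac_neq0 Q1z, pfrac_neq0 Q2z).
  rewrite expr1 [qint p * N]mulrC -NE -mulNr (addf_div _ _ Q1f Q2f).
  by rewrite /pfrac rmorphB !rmorphM mulNr.
Qed.

End PrimitiveRoot.

Lemma value_at_summand p m r s k z : p.-primitive_root (z ^+ m) -> (k + s < p)%N ->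
  value_at z (summand m r s k) (qterm (z ^+ m) (z ^+ r) (z ^+ (m - r)) s k).
Proof.
move=> x_prim ltksp.
exists (qpoch 'X^r 'X^m k * qpoch 'X^(m - r) 'X^m (k + s)),
       (qpoch 'X^m 'X^m k * qpoch 'X^m 'X^m (k + s)).
rewrite /qterm !rmorphM !ev_qpoch !rmorphXn !evX; split=> //.
by rewrite mulf_neq0 // (poch_prim_neq0 x_prim) //; apply: leq_ltn_trans ltksp; rewrite leq_addr.
Qed.

Lemma eqn_modMl_coprime p k i j : coprime p k ->
  (k * i == k * j %[mod p])%N = (i == j %[mod p])%N.
Proof.
move=> co_pk; wlog le_ji : i j / (j <= i)%N.
  by move=> IH; case/orP: (leq_total j i) => /IH //; rewrite eq_sym => ->; rewrite eq_sym.
by rewrite !eqn_mod_dvd ?leq_mul2l ?le_ji ?orbT // -mulnBr Gauss_dvdr.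
Qed.

Lemma dvdz_lnr_neg_ratio (p r m t : nat) : prime p -> ~~ (p %| m)%N ->
  ((p%:Z) %| numq (- (r%:Q / m%:Q)) - t%:Z * denq (- (r%:Q / m%:Q)))%Z =
  (p %| r + t * m)%N.
Proof.
move=> p_prime pNm; have m_gt0 : (0 < m)%N by case: m pNm; rewrite ?dvdn0.
set x := - _; set n := numq x; set e := denq x.
have n_le0 : n <= 0 by rewrite numq_le0 oppr_le0 divr_ge0.
have e_gt0 : 0 < e := denq_gt0 x.
have nmE : n * m%:Z = - (r%:Z * e).
  apply: (@intr_inj rat); rewrite !rmorphM rmorphN rmorphM /= numqE /x.
  by field; rewrite pnatr_eq0 -lt0n.
have NE : (`|n| * m = r * `|e|)%N by lia.
have pNe : ~~ (p %| `|e|)%N.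
  apply/negP => p_e; have : (p %| `|n| * m)%N by rewrite NE dvdn_mull.
  rewrite Euclid_dvdM // (negbTE pNm) orbF => p_n.
  have : (p %| 1)%N by rewrite -(eqP (coprime_num_den x)) dvdn_gcd p_n.
  by rewrite dvdn1 => /eqP p1; rewrite p1 in p_prime.
rewrite dvdzE /=; have -> : absz (n - t%:Z * e)%R = (absz n + t * absz e)%N by lia.
rewrite -(Gauss_dvdr _ (_ : coprime p m)) ?prime_coprime //.
by rewrite (_ : m * _ = absz e * (r + t * m))%N ?Gauss_dvdr ?prime_coprime //; nia.
Qed.

Lemma lnr_neg_ratio (p r m : nat) : prime p -> ~~ (p %| m)%N ->
  (lnr p (- (r%:Q / m%:Q)) < p)%N /\ (p %| r + lnr p (- (r%:Q / m%:Q)) * m)%N.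
Proof.
move=> p_prime pNm; set P := fun t => (p %| r + t * m)%N.
have -> : lnr p (- (r%:Q / m%:Q)) = find P (iota 0 p).
  by apply: eq_find => t; apply: dvdz_lnr_neg_ratio.
have [u _ pu] := Bezoutl m (prime_gt0 p_prime).
rewrite (eqP (_ : coprime p m)) ?prime_coprime // in pu.
have has_P : has P (iota 0 p).
  apply/hasP; exists ((r * u) %% p)%N; first by rewrite mem_iota ltn_mod prime_gt0.
  rewrite /P /dvdn -modnDmr modnMml modnDmr -/(dvdn p _).
  by rewrite (_ : r + r * u * m = r * (1 + u * m))%N ?dvdn_mull //; ring.
split; first by rewrite -[p in (_ < p)%N](size_iota 0 p) -has_find.
by have := nth_find 0 has_P; rewrite nth_iota // -[p in (_ < p)%N](size_iota 0 p) -has_find.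
Qed.

Lemma residues_sum (p r m a b : nat) : prime p -> ~~ (p %| m)%N -> (r <= m)%N ->
  (a < p)%N -> (b < p)%N -> (p %| r + a * m)%N -> (p %| (m - r) + b * m)%N ->
  (a + b).+1 = p.
Proof.
move=> p_prime pNm lerm ltap ltbp pa pb.
have : (p %| m * (a + b).+1)%N.
  have -> : (m * (a + b).+1 = r + a * m + (m - r + b * m))%N by nia.
  exact: dvdn_add.
rewrite Euclid_dvdM // (negbTE pNm) => /dvdnP[k kE].
have : (k * p < 2 * p)%N by rewrite -kE; lia.
rewrite ltn_pmul2r ?prime_gt0 //; by case: k kE => [|[|]] //= ->; rewrite mul1n.
Qed.

Lemma dvdn_sqr_sub1 (p m : nat) : odd p ->
  (p = 1 %[mod m] \/ p.+1 = 0 %[mod m])%N -> (2 * m %| p ^ 2 - 1)%N.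
Proof.
move=> p_odd pm; have p_gt0 : (0 < p)%N by case: (p) p_odd.
have -> : (p ^ 2 - 1 = (p - 1) * (p + 1))%N by rewrite -subn_sqr exp1n.
have e1 : (2 %| p - 1)%N by rewrite dvdn2 oddB // p_odd.
have e2 : (2 %| p + 1)%N by rewrite dvdn2 oddD p_odd.
case: pm => [pm | pm].
  by rewrite mulnC dvdn_mul // -(eqn_mod_dvd _ p_gt0) pm.
by rewrite dvdn_mul // /dvdn addn1 pm mod0n.
Qed.

Lemma sqr_sub1_div_mod (p m r a : nat) : prime p -> ~~ (p %| 2 * m)%N -> (r <= m)%N ->
  (p %| r + a * m)%N -> (2 * m %| r * (m - r) * (p ^ 2 - 1))%N ->
  ((r * (m - r) * (p ^ 2 - 1)) %/ (2 * m) = m * 'C(a.+1, 2) %[mod p])%N.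
Proof.
move=> p_prime pNm2 lerm pa dvd2m; apply/eqP.
set N := (_ %/ _)%N; have NE : (N * (2 * m) = r * (m - r) * (p ^ 2 - 1))%N := divnK dvd2m.
rewrite -(@eqn_modMl_coprime p (2 * m)%N) ?prime_coprime // -(eqn_modDr (r * (m - r))%N).
have -> : (2 * m * N + r * (m - r) = r * (m - r) * p ^ 2)%N.
  rewrite mulnC NE -[X in (_ + X)%N]muln1 -mulnDr subnK //.
  by rewrite expn_gt0 prime_gt0.
have -> : (2 * m * (m * 'C(a.+1, 2)) + r * (m - r) = (r + a * m) * (m - r + a * m))%N.
  have := mul_bin_diag a.+1 1; rewrite bin1 /= => bin2E.
  have -> : (2 * m * (m * 'C(a.+1, 2)) = m * m * (a.+1 * a))%N by rewrite bin2E; ring.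
  by move: (m - r)%N (subnK lerm) => d <-; rewrite -addn1; ring.
have /eqP -> : (p %| r * (m - r) * p ^ 2)%N by rewrite dvdn_mull // dvdn_exp.
by have /eqP -> : (p %| (r + a * m) * (m - r + a * m))%N by rewrite dvdn_mulr.
Qed.

Theorem theorem2p7 (p m r : nat) :
  prime p -> odd p -> (0 < m)%N -> (0 < r)%N -> ~~ (p %| m)%N -> (r < m)%N ->
  forall s : nat,
    (s <= lnr p (- ((m - r)%N%:Q / m%:Q)))%N ->
    qcong p 1 (\sum_(k < p - s) summand m r s k)
      ((-1) ^+ lnr p (- (r%:Q / m%:Q)) *
       qpow (- (((m * (lnr p (- (r%:Q / m%:Q)) * (lnr p (- (r%:Q / m%:Q))).+1)) %/ 2)%N)%:Z))
    /\
    ((p = 1 %[mod m] \/ p.+1 = 0 %[mod m])%N ->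
     qcong p 1 (\sum_(k < p - s) summand m r s k)
      ((-1) ^+ lnr p (- (r%:Q / m%:Q)) *
       qpow (- (((r * (m - r) * (p ^ 2 - 1)) %/ (2 * m))%N)%:Z))).
Proof.
move=> p_prime p_odd _ _ pNm ltrm s les.
have [lt_ap pa] := lnr_neg_ratio r p_prime pNm.
have [lt_bp pb] := lnr_neg_ratio (m - r) p_prime pNm.
set a := lnr p _ in lt_ap pa *; set b := lnr p _ in les lt_bp pb.
have abp := residues_sum p_prime pNm (ltnW ltrm) lt_ap lt_bp pa pb.
have [z z_prim] := C_prim_root_exists (prime_gt0 p_prime).
have z_neq0 : z != 0 by rewrite (prim_root_eq0 z_prim) -lt0n prime_gt0.
have x_prim : p.-primitive_root (z ^+ m).
  by rewrite prim_root_exp_coprime // coprime_sym prime_coprime.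
have cxa : z ^+ r * (z ^+ m) ^+ a = 1.
  by rewrite -exprM -exprD; apply/eqP; rewrite -(prim_order_dvd z_prim) mulnC.
have dE : z ^+ (m - r) = (z ^+ m) ^+ a.+1.
  rewrite -exprM (_ : m * a.+1 = m - r + (r + a * m))%N; last by nia.
  by move: pa; rewrite exprD (prim_order_dvd z_prim) => /eqP ->; rewrite mulr1.
have sum_value : value_at z (\sum_(k < p - s) summand m r s k)
                            (qsum p (z ^+ m) (z ^+ r) (z ^+ (m - r)) s).
  by apply: value_at_sum => k ltk; apply: value_at_summand x_prim _; lia.
have target N : (N = m * 'C(a.+1, 2) %[mod p])%N ->
    qcong p 1 (\sum_(k < p - s) summand m r s k) ((-1) ^+ a * qpow (- N%:Z)).
  move=> NE; apply: (qcong_value_at p_prime z_prim sum_value).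
  have les' : (s <= p - a.+1)%N by rewrite -abp subSS addKn.
  rewrite (qsum_const x_prim cxa dE p_odd lt_ap les').
  rewrite -exprM (_ : z ^+ (m * 'C(a.+1, 2)) = z ^+ N); first exact: value_at_signed_qpowN.
  by apply/eqP; rewrite (eq_prim_root_expr z_prim) NE.
split=> [|pm]; apply: target.
  rewrite (_ : m * (a * a.+1) = 2 * (m * 'C(a.+1, 2)))%N ?mulKn //.
  by rewrite (mulnC a) [RHS]mulnCA -mul_bin_diag bin1.
apply: (sqr_sub1_div_mod p_prime _ (ltnW ltrm) pa); last by rewrite dvdn_mull // dvdn_sqr_sub1.
by rewrite Euclid_dvdM // negb_or pNm andbT dvdn_prime2 //; apply: contraL p_odd => /eqP->.
Qed.
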